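(* Let $R \in \mathcal{R}$ and let $R^\perp = \bigcup\{X : X \text{ is a nice set and } R = X \to \mathcal{N}\}$. Then (1) $R^\perp$ is a nice set, and (2) $R = R^\perp \to \mathcal{N}$.
   Context: With disjoint sets of $\lambda$-variables $x,y,\dots$ and $\mu$-variables $a,b,\dots$, terms and $\mathcal{E}$-terms are $\mathcal{T} ::= x \mid \lambda x.\mathcal{T} \mid (\mathcal{T}\;\mathcal{E}) \mid \langle \mathcal{T},\mathcal{T}\rangle \mid \omega_1\mathcal{T} \mid \omega_2\mathcal{T} \mid \mu a.\mathcal{T} \mid (a\;\mathcal{T})$, $\mathcal{E} ::= \mathcal{T} \mid \pi_1 \mid \pi_2 \mid [x.\mathcal{T}, y.\mathcal{T}]$ (up to renaming of bound variables). The one-step reduction $\triangleright$ is the closure under all constructors of: $(\lambda x.u\;v)\triangleright u[x:=v]$; $(\langle t_1,t_2\rangle\;\pi_i)\triangleright t_i$; $(\omega_i t\;[x_1.u_1,x_2.u_2])\triangleright u_i[x_i:=t]$; $((t\;[x_1.u_1,x_2.u_2])\;\varepsilon)\triangleright(t\;[x_1.(u_1\;\varepsilon),x_2.(u_2\;\varepsilon)])$; $(\mu a.t\;\varepsilon)\triangleright\mu a.t[a:=^*\varepsilon]$, where $t[a:=^*\varepsilon]$ replaces inductively each subterm $(a\;v)$ by $(a\;(v\;\varepsilon))$. $\mathcal{N}$ (resp. $\mathcal{N}'$) is the set of strongly normalizable terms (resp. $\mathcal{E}$-terms), $\mathcal{N}'^{<\omega}$ the set of finite sequences of elements of $\mathcal{N}'$.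 For $\bar{w}=w_1\dots w_n$ and a term $t$, $(t\;\bar{w})$ is $t$ if $n=0$ and $((t\;w_1)\;w_2\dots w_n)$ otherwise. For $S\subseteq\mathcal{N}'^{<\omega}$ and a set of terms $K$, $S\to K=\{t\in\mathcal{T} : (t\;\bar{w})\in K \text{ for each } \bar{w}\in S\}$. A sequence $\bar{w}\in\mathcal{N}'^{<\omega}$ is nice iff none of $w_1,\dots,w_{n-1}$ is of the form $[x.u,y.v]$; a set $X\subseteq\mathcal{N}'^{<\omega}$ is nice iff all its elements are nice. For sets $K,L$ of terms: $K\to L=\{t : (t\;u)\in L \text{ for all } u\in K\}$; $K\wedge L=\{t : (t\;\pi_1)\in K, (t\;\pi_2)\in L\}$; $K\vee L=\{t :$ for all $\lambda$-variables $x,y$ and all $u,v\in\mathcal{N}$, if $u[x:=r]\in\mathcal{N}$ and $v[y:=s]\in\mathcal{N}$ for all $r\in K,s\in L$, then $(t\;[x.u,y.v])\in\mathcal{N}\}$. $\mathcal{R}$ is the smallest set of sets of terms containing $\mathcal{N}$ and closed under $\to,\wedge,\vee$. *)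

(* Terms of the lambda-mu calculus with pairs and sums,
   represented with de Bruijn indices (two separate index spaces: one for
   lambda-variables, one for mu-variables), so that terms are automatically
   identified up to renaming of bound variables. *)
From Stdlib Require Import List Arith.
Import ListNotations.

Inductive term : Type :=
| Var : nat -> term
| Lam : term -> term
| App : term -> eterm -> term
| Pair : term -> term -> term
| Inj1 : term -> term
| Inj2 : term -> term
| Mu : term -> term
| MuApp : nat -> term -> term
with eterm : Type :=
| ETm : term -> eterm
| Proj1 : eterm
| Proj2 : eterm
| Case : term -> term -> eterm.     (* [x.u, y.v]; each branch binds one lambda-variable *)

Fixpoint liftL (k : nat) (t : term) : term :=
  match t with
  | Var n => Var (if k <=? n then S n else n)
  | Lam u => Lam (liftL (S k) u)
  | App u e => App (liftL k u) (liftLe k e)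
  | Pair u v => Pair (liftL k u) (liftL k v)
  | Inj1 u => Inj1 (liftL k u)
  | Inj2 u => Inj2 (liftL k u)
  | Mu u => Mu (liftL k u)
  | MuApp a u => MuApp a (liftL k u)
  end
with liftLe (k : nat) (e : eterm) : eterm :=
  match e with
  | ETm u => ETm (liftL k u)
  | Proj1 => Proj1
  | Proj2 => Proj2
  | Case u v => Case (liftL (S k) u) (liftL (S k) v)
  end.

Fixpoint liftM (k : nat) (t : term) : term :=
  match t with
  | Var n => Var n
  | Lam u => Lam (liftM k u)
  | App u e => App (liftM k u) (liftMe k e)
  | Pair u v => Pair (liftM k u) (liftM k v)
  | Inj1 u => Inj1 (liftM k u)
  | Inj2 u => Inj2 (liftM k u)
  | Mu u => Mu (liftM (S k) u)
  | MuApp a u => MuApp (if k <=? a then S a else a) (liftM k u)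
  end
with liftMe (k : nat) (e : eterm) : eterm :=
  match e with
  | ETm u => ETm (liftM k u)
  | Proj1 => Proj1
  | Proj2 => Proj2
  | Case u v => Case (liftM k u) (liftM k v)
  end.

(* substL k v t : capture-avoiding substitution of v for the lambda-index k
   in t (v lives in the context of t at the current depth); free indices
   above k are decremented, since the binder of k disappears. *)
Fixpoint substL (k : nat) (v : term) (t : term) : term :=
  match t with
  | Var n => if n =? k then v else if k <? n then Var (pred n) else Var n
  | Lam u => Lam (substL (S k) (liftL 0 v) u)
  | App u e => App (substL k v u) (substLe k v e)
  | Pair u w => Pair (substL k v u) (substL k v w)
  | Inj1 u => Inj1 (substL k v u)
  | Inj2 u => Inj2 (substL k v u)
  | Mu u => Mu (substL k (liftM 0 v) u)
  | MuApp a u => MuApp a (substL k v u)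
  end
with substLe (k : nat) (v : term) (e : eterm) : eterm :=
  match e with
  | ETm u => ETm (substL k v u)
  | Proj1 => Proj1
  | Proj2 => Proj2
  | Case u w => Case (substL (S k) (liftL 0 v) u) (substL (S k) (liftL 0 v) w)
  end.

(* u[x := v] where x is the variable bound by the enclosing binder (index 0) *)
Definition subst0 (v : term) (u : term) : term := substL 0 v u.

Fixpoint msubst (a : nat) (e : eterm) (t : term) : term :=
  match t with
  | Var n => Var n
  | Lam u => Lam (msubst a (liftLe 0 e) u)
  | App u f => App (msubst a e u) (msubste a e f)
  | Pair u w => Pair (msubst a e u) (msubst a e w)
  | Inj1 u => Inj1 (msubst a e u)
  | Inj2 u => Inj2 (msubst a e u)
  | Mu u => Mu (msubst (S a) (liftMe 0 e) u)
  | MuApp b u =>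
      if b =? a then MuApp b (App (msubst a e u) e) else MuApp b (msubst a e u)
  end
with msubste (a : nat) (e : eterm) (f : eterm) : eterm :=
  match f with
  | ETm u => ETm (msubst a e u)
  | Proj1 => Proj1
  | Proj2 => Proj2
  | Case u w => Case (msubst a (liftLe 0 e) u) (msubst a (liftLe 0 e) w)
  end.

Inductive step : term -> term -> Prop :=
| st_beta : forall u v, step (App (Lam u) (ETm v)) (subst0 v u)
| st_proj1 : forall t1 t2, step (App (Pair t1 t2) Proj1) t1
| st_proj2 : forall t1 t2, step (App (Pair t1 t2) Proj2) t2
| st_case1 : forall t u1 u2, step (App (Inj1 t) (Case u1 u2)) (subst0 t u1)
| st_case2 : forall t u1 u2, step (App (Inj2 t) (Case u1 u2)) (subst0 t u2)
| st_comm : forall t u1 u2 e,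
    step (App (App t (Case u1 u2)) e)
         (App t (Case (App u1 (liftLe 0 e)) (App u2 (liftLe 0 e))))
| st_mu : forall t e, step (App (Mu t) e) (Mu (msubst 0 (liftMe 0 e) t))
| st_lam : forall t t', step t t' -> step (Lam t) (Lam t')
| st_appl : forall t t' e, step t t' -> step (App t e) (App t' e)
| st_appr : forall t e e', estep e e' -> step (App t e) (App t e')
| st_pairl : forall t t' u, step t t' -> step (Pair t u) (Pair t' u)
| st_pairr : forall t u u', step u u' -> step (Pair t u) (Pair t u')
| st_inj1 : forall t t', step t t' -> step (Inj1 t) (Inj1 t')
| st_inj2 : forall t t', step t t' -> step (Inj2 t) (Inj2 t')
| st_mub : forall t t', step t t' -> step (Mu t) (Mu t')
| st_muapp : forall a t t', step t t' -> step (MuApp a t) (MuApp a t')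
with estep : eterm -> eterm -> Prop :=
| est_tm : forall t t', step t t' -> estep (ETm t) (ETm t')
| est_casel : forall u u' v, step u u' -> estep (Case u v) (Case u' v)
| est_caser : forall u v v', step v v' -> estep (Case u v) (Case u v').

(* strongly normalizable terms (the set N) and E-terms (the set N') *)
Definition SN (t : term) : Prop := Acc (fun y x => step x y) t.
Definition SNe (e : eterm) : Prop := Acc (fun y x => estep x y) e.

Definition tset := term -> Prop.
Definition same_set (A B : tset) : Prop := forall t, A t <-> B t.

Definition app_seq (t : term) (ws : list eterm) : term := fold_left App ws t.

Definition seq_arrow (S : list eterm -> Prop) (K : tset) : tset :=
  fun t => forall ws, S ws -> K (app_seq t ws).

Definition is_case (e : eterm) : Prop :=
  match e with Case _ _ => True | _ => False end.

(* a nice sequence: an element of N'^{<omega} none of whose entries except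
   possibly the last is of the form [x.u, y.v] *)
Definition nice_seq (ws : list eterm) : Prop :=
  Forall SNe ws /\
  forall i, S i < length ws -> ~ is_case (nth i ws Proj1).

Definition nice_set (X : list eterm -> Prop) : Prop :=
  forall ws, X ws -> nice_seq ws.

Definition arrow (K L : tset) : tset := fun t => forall u, K u -> L (App t (ETm u)).
Definition conj (K L : tset) : tset := fun t => K (App t Proj1) /\ L (App t Proj2).
(* K \/ L: the branch bodies u, v live under the binder of x (resp. y), i.e.
   index 0; u[x:=r] is subst0 r u. *)
Definition disj (K L : tset) : tset :=
  fun t => forall u v, SN u -> SN v ->
    (forall r, K r -> SN (subst0 r u)) ->
    (forall s, L s -> SN (subst0 s v)) ->
    SN (App t (Case u v)).

(* the family R: smallest set of sets of terms containing N and closed under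
   ->, /\, \/ (sets being identified up to extensional equality) *)
Inductive inR : tset -> Prop :=
| inR_N : inR SN
| inR_arrow : forall K L, inR K -> inR L -> inR (arrow K L)
| inR_conj : forall K L, inR K -> inR L -> inR (conj K L)
| inR_disj : forall K L, inR K -> inR L -> inR (disj K L)
| inR_ext : forall K K', inR K -> same_set K K' -> inR K'.

Definition Rperp (R : tset) : list eterm -> Prop :=
  fun ws => exists X, nice_set X /\ same_set R (seq_arrow X SN) /\ X ws.

(* Every R in the family is of the form X -> N for a nice X: N is ([] -> N),
   K -> L is ({u :: ws | u in K, ws in X_L} -> N), K /\ L is
   ({pi_1 :: ws | ws in X_K} u {pi_2 :: ws | ws in X_L} -> N), and K \/ L is
   ({[[x.u, y.v]] | the branches are admissible} -> N).  The arrow case needs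
   K to consist of SN terms so that the new sequences stay in N'^{<omega};
   this holds because every R is included in N, variables applied to nice
   sequences being strongly normalizable.  Since R^perp is the union of all
   nice X with R = X -> N, it is nice, and R^perp -> N is the intersection of
   these sets X -> N, all equal to R. *)
From Stdlib Require Import List Lia.
Import ListNotations.

Lemma SN_App_l t e : SN (App t e) -> SN t.
Proof.
  intros Hs; remember (App t e) as s eqn:Es; revert t e Es.
  induction Hs as [s _ IH]; intros t e ->.
  constructor; intros t' Ht. eapply (IH (App t' e)); [now constructor | easy].
Qed.

Lemma SN_Var n : SN (Var n).
Proof. constructor; intros y H; inversion H. Qed.

Lemma SNe_ETm u : SN u -> SNe (ETm u).
Proof.
  induction 1 as [u _ IH]; constructor; intros e' H.
  inversion H; subst; now apply IH.
Qed.

Lemma SNe_Proj1 : SNe Proj1.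
Proof. constructor; intros y H; inversion H. Qed.

Lemma SNe_Proj2 : SNe Proj2.
Proof. constructor; intros y H; inversion H. Qed.

Lemma SNe_Case u v : SN u -> SN v -> SNe (Case u v).
Proof.
  intros Hu; revert v; induction Hu as [u Hu IHu]; intros v Hv.
  induction Hv as [v Hv IHv]; constructor; intros e' H.
  inversion H; subst.
  - apply IHu; [easy | now constructor].
  - now apply IHv.
Qed.

Lemma nice_seq_cons w ws :
  nice_seq (w :: ws) <-> SNe w /\ nice_seq ws /\ (ws <> [] -> ~ is_case w).
Proof.
  split.
  - intros [HF Hi]; inversion HF; subst; split; [easy | split; [split |]].
    + easy.
    + intros i Hl; apply (Hi (S i)); simpl; lia.
    + intros Hne; apply (Hi 0); destruct ws; [congruence | simpl; lia].
  - intros [Hw [[HF Hi] Hc]]; split; [now constructor |].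
    intros [|i] Hl; simpl in *.
    + apply Hc; destruct ws; simpl in Hl; [lia | discriminate].
    + apply Hi; lia.
Qed.

(* A variable applied to E-terms none of which is a case: no redex can ever
   appear at the head. *)
Fixpoint neutral (t : term) : Prop :=
  match t with
  | Var _ => True
  | App t' e => neutral t' /\ ~ is_case e
  | _ => False
  end.

Lemma step_neutral t t' : step t t' -> neutral t -> neutral t'.
Proof.
  induction 1; simpl; try tauto.
  intros [Ht Hc]; split; [easy |].
  inversion H; subst; simpl in *; auto.
Qed.

Lemma SN_App_neutral t e : SN t -> neutral t -> SNe e -> SN (App t e).
Proof.
  intros Ht; revert e; induction Ht as [t Ht IHt]; intros e Hn He.
  induction He as [e He IHe]; constructor; intros y Hy.
  inversion Hy; subst; simpl in Hn; try tauto.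
  - apply IHt; [easy | eapply step_neutral; eauto | now constructor].
  - now apply IHe.
Qed.

Lemma SN_app_seq_neutral ws t :
  nice_seq ws -> SN t -> neutral t -> SN (app_seq t ws).
Proof.
  revert t; induction ws as [|w ws IH]; intros t Hws Ht Hn; simpl; [easy |].
  apply nice_seq_cons in Hws as [Hw [Hws Hc]].
  destruct ws as [|w' ws]; simpl.
  - now apply SN_App_neutral.
  - apply IH; [easy | now apply SN_App_neutral |].
    split; [easy | apply Hc; discriminate].
Qed.

Lemma seq_arrow_SN_Var X n : nice_set X -> seq_arrow X SN (Var n).
Proof. intros HX ws Hws; apply SN_app_seq_neutral; simpl; auto using SN_Var. Qed.

Definition nil_set : list eterm -> Prop := fun ws => ws = [].

Definition cons_set (P : eterm -> Prop) (X : list eterm -> Prop) :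
  list eterm -> Prop :=
  fun ws => exists w ws', ws = w :: ws' /\ P w /\ X ws'.

Definition union_set (X Y : list eterm -> Prop) : list eterm -> Prop :=
  fun ws => X ws \/ Y ws.

Lemma seq_arrow_nil_set K : same_set (seq_arrow nil_set K) K.
Proof.
  intros t; split.
  - intros H; now apply (H []).
  - intros H ws ->; exact H.
Qed.

Lemma seq_arrow_cons_set P X K t :
  seq_arrow (cons_set P X) K t <-> forall w, P w -> seq_arrow X K (App t w).
Proof.
  split.
  - intros H w Hw ws Hws; apply (H (w :: ws)); now exists w, ws.
  - intros H ws (w & ws' & -> & Hw & Hws); now apply H.
Qed.

Lemma seq_arrow_union_set X Y K t :
  seq_arrow (union_set X Y) K t <-> seq_arrow X K t /\ seq_arrow Y K t.
Proof.
  unfold seq_arrow, union_set; split.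
  - intros H; split; intros ws Hws; apply H; auto.
  - intros [HX HY] ws [Hws | Hws]; auto.
Qed.

Lemma nice_set_nil_set : nice_set nil_set.
Proof. intros ws ->; split; [constructor | simpl; lia]. Qed.

Lemma nice_set_cons_set P X :
  (forall w, P w -> SNe w) -> nice_set X ->
  (forall w ws, P w -> X ws -> ws <> [] -> ~ is_case w) ->
  nice_set (cons_set P X).
Proof.
  intros HP HX Hc ws (w & ws' & -> & Hw & Hws).
  apply nice_seq_cons; split; [| split]; eauto.
Qed.

Lemma nice_set_union_set X Y :
  nice_set X -> nice_set Y -> nice_set (union_set X Y).
Proof. intros HX HY ws [Hws | Hws]; auto. Qed.

Definition representable (R : tset) : Prop :=
  exists X, nice_set X /\ same_set R (seq_arrow X SN).

Lemma representable_ext K K' :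
  representable K -> same_set K K' -> representable K'.
Proof.
  intros (X & HX & HK) E; exists X; split; [easy |].
  intros t; rewrite <- (E t); apply HK.
Qed.

Lemma representable_SN : representable SN.
Proof.
  exists nil_set; split; [apply nice_set_nil_set |].
  intros t; symmetry; apply seq_arrow_nil_set.
Qed.

Lemma representable_arrow K L :
  (forall u, K u -> SN u) -> representable L -> representable (arrow K L).
Proof.
  intros HK (XL & HXL & HL).
  exists (cons_set (fun w => exists u, w = ETm u /\ K u) XL); split.
  - apply nice_set_cons_set; [| easy |].
    + intros w (u & -> & Hu); auto using SNe_ETm.
    + now intros w ws (u & -> & _).
  - intros t; rewrite seq_arrow_cons_set; split.
    + intros H w (u & -> & Hu); now apply HL, H.
    + intros H u Hu; apply HL, H; eauto.
Qed.

Lemma representable_conj K L :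
  representable K -> representable L -> representable (conj K L).
Proof.
  intros (XK & HXK & HK) (XL & HXL & HL).
  exists (union_set (cons_set (fun w => w = Proj1) XK)
                    (cons_set (fun w => w = Proj2) XL)); split.
  - apply nice_set_union_set; apply nice_set_cons_set.
    1: intros w ->; apply SNe_Proj1.
    3: intros w ->; apply SNe_Proj2.
    1, 3: assumption.
    all: now intros w ws ->.
  - intros t; rewrite seq_arrow_union_set, !seq_arrow_cons_set; split.
    + intros [H1 H2]; split; intros w ->; [apply HK | apply HL]; easy.
    + intros [H1 H2]; split; [apply HK, H1 | apply HL, H2]; easy.
Qed.

Lemma representable_disj K L : representable (disj K L).
Proof.
  exists (cons_set (fun w => exists u v, w = Case u v /\ SN u /\ SN v /\
             (forall r, K r -> SN (subst0 r u)) /\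
             (forall s, L s -> SN (subst0 s v))) nil_set); split.
  - apply nice_set_cons_set; [| apply nice_set_nil_set | now intros w ws _ ->].
    intros w (u & v & -> & Hu & Hv & _); auto using SNe_Case.
  - intros t; rewrite seq_arrow_cons_set; split.
    + intros H w (u & v & -> & Hu & Hv & Hr & Hs).
      apply seq_arrow_nil_set; auto.
    + intros H u v Hu Hv Hr Hs; apply seq_arrow_nil_set, H.
      exists u, v; auto.
Qed.

Lemma arrow_sub_SN K L t :
  K (Var 0) -> (forall u, L u -> SN u) -> arrow K L t -> SN t.
Proof. intros HK HL H; eapply SN_App_l, HL, H, HK. Qed.

Lemma conj_sub_SN K L t : (forall u, K u -> SN u) -> conj K L t -> SN t.
Proof. intros HK [H _]; eapply SN_App_l, HK, H. Qed.

(* Branches [Var 1] ignore the bound variable, so they are admissible for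
   any K and L. *)
Lemma disj_sub_SN K L t : disj K L t -> SN t.
Proof.
  intros H; eapply SN_App_l, (H (Var 1) (Var 1)); auto using SN_Var;
    intros; apply SN_Var.
Qed.

Lemma inR_representable_sub_SN R :
  inR R -> representable R /\ (forall t, R t -> SN t).
Proof.
  induction 1 as [| K L _ [RK SK] _ [RL SL] | K L _ [RK SK] _ [RL SL]
                  | K L _ [RK SK] _ [RL SL] | K K' _ [RK SK] E].
  - split; [apply representable_SN | easy].
  - split; [now apply representable_arrow |].
    destruct RK as (XK & HXK & HK).
    intros t; apply arrow_sub_SN; [apply HK, seq_arrow_SN_Var, HXK | exact SL].
  - split; [now apply representable_conj | intros t; now apply conj_sub_SN].
  - split; [apply representable_disj | apply disj_sub_SN].
  - split; [now apply (representable_ext K) | intros t Ht; apply SK, E, Ht].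
Qed.

Lemma nice_set_Rperp R : nice_set (Rperp R).
Proof. intros ws (X & HX & _ & Hws); now apply HX. Qed.

Lemma same_set_Rperp R : representable R -> same_set R (seq_arrow (Rperp R) SN).
Proof.
  intros (X0 & HX0 & HR0) t; split.
  - intros Ht ws (X & _ & HR & Hws); now apply HR.
  - intros H; apply HR0; intros ws Hws; apply H; now exists X0.
Qed.

Theorem lemma7 (R : tset) (HR : inR R) :
  nice_set (Rperp R) /\ same_set R (seq_arrow (Rperp R) SN).
Proof.
  split; [apply nice_set_Rperp |].
  apply same_set_Rperp, inR_representable_sub_SN, HR.
Qed.
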